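(* In the ALOHA network described below, the transmit probability $p_{\mathrm{opt}}\in(0,1)$ that minimizes the mean local delay $\widetilde{D}(p)$ satisfies $$p_{\mathrm{opt}}\in\left(\frac{1}{\lambda c_d r_0^d\theta^{\delta}C(\delta)+2},\ \frac{1}{\lambda c_d r_0^d\theta^{\delta}C(\delta)}\right).$$
   Context: Model: transmitters form a homogeneous Poisson point process $\Phi$ of intensity $\lambda>0$ in $\mathbb{R}^d$; the typical receiver is at the origin and its desired transmitter $x_0\in\Phi$ is at distance $r_0>0$; probabilities are under the Palm distribution at $x_0$. Time is slotted. Path loss $\kappa r^{-\alpha}$ with $\alpha>d$, $\delta=d/\alpha\in(0,1)$. Power fading coefficients $h_{k,x}$ are i.i.d. exponential with mean $1$ over transmitters and slots, independent of everything. Unit power, always backlogged transmitters. Bandwidth $W$, noise power spectral density $N_r$, $N_0=N_r/\kappa$, SINR threshold $\theta>0$. $c_d$ is the volume of the unit ball in $\mathbb{R}^d$, $C(\delta)=\Gamma(1+\delta)\Gamma(1-\delta)=\frac{\pi\delta}{\sin(\pi\delta)}$. ALOHA with transmit probability $p$: each transmitter (including $x_0$) is independently active in each slot with probability $p$, independently over transmitters and slots; $\Phi_k$ is the active set in slot $k$; $\mathrm{SINR}_k=\frac{h_{k,x_0}r_0^{-\alpha}}{WN_0+\sum_{x\in\Phi\setminus\{x_0\}}h_{k,x}|x|^{-\alpha}\mathbf{1}(x\in\Phi_k)}$; a slot is successful if $x_0$ is active and $\mathrm{SINR}_k>\theta$; the local delay is the number of slots until the first success and $\widetilde{D}(p)$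 is its mean. (It equals $\widetilde{D}(p)=\frac1p\exp\left(\frac{p\lambda c_d r_0^d\theta^\delta C(\delta)}{(1-p)^{1-\delta}}+\theta r_0^\alpha WN_0\right)$.) *)

From Stdlib Require Import Reals Lra Arith Factorial.
Open Scope R_scope.

(* Volume of the unit ball in R^d: c_d = PI^(d/2) / Gamma(d/2+1), written
   out at integer / half-integer arguments:
   d = 2k   : PI^k / k!
   d = 2k+1 : 2 * k! * (4 PI)^k / (2k+1)! *)
Definition unit_ball_volume (d : nat) : R :=
  if Nat.even d then PI ^ (Nat.div2 d) / INR (fact (Nat.div2 d))
  else 2 * INR (fact (Nat.div2 d)) * (4 * PI) ^ (Nat.div2 d) / INR (fact d).

(* C(delta) = Gamma(1+delta) Gamma(1-delta) = PI delta / sin(PI delta) *)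
Definition Cdelta (delta : R) : R := PI * delta / sin (PI * delta).

Definition delta_of (d : nat) (alpha : R) : R := INR d / alpha.

Definition aloha_a (lam : R) (d : nat) (alpha r0 theta : R) : R :=
  lam * unit_ball_volume d * r0 ^ d * Rpower theta (delta_of d alpha)
      * Cdelta (delta_of d alpha).

Definition mean_local_delay (lam : R) (d : nat) (alpha r0 theta W N0 : R)
    (p : R) : R :=
  / p * exp (p * aloha_a lam d alpha r0 theta
                 / Rpower (1 - p) (1 - delta_of d alpha)
             + theta * Rpower r0 alpha * W * N0).

From Stdlib Require Import Reals Factorial Lra Psatz Lia.
Open Scope R_scope.

(** Up to the positive factor [exp (theta r0^alpha W N0)], the delay is
    [exp F] with [F p = - ln p + a p (1-p)^(delta-1)], and
    [p F'(p) = a p (1-p)^(delta-2) (1 - delta p) - 1].  Comparing the powers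
    of [1 - p] with [1] shows that [F' < 0] as soon as [p (a+2) <= 1] and
    [F' > 0] as soon as [a p >= 1] or [p (1 + a(1-delta)) >= 1].  Hence [F]
    attains its minimum on [(0,1)], and any minimiser, being a critical
    point, lies strictly between [1/(a+2)] and [1/a]. *)

Lemma Rpower_lt_1 (y e : R) : 0 < y < 1 -> 0 < e -> Rpower y e < 1.
Proof.
  intros hy he. unfold Rpower. rewrite <- exp_0. apply exp_increasing.
  assert (ln y < 0) by (rewrite <- ln_1; apply ln_increasing; lra).
  nra.
Qed.

Lemma Rpower_gt_1 (y e : R) : 0 < y < 1 -> e < 0 -> 1 < Rpower y e.
Proof.
  intros hy he. unfold Rpower. rewrite <- exp_0. apply exp_increasing.
  assert (ln y < 0) by (rewrite <- ln_1; apply ln_increasing; lra).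
  nra.
Qed.

Lemma Rpower_plus_1 (y e : R) : 0 < y -> Rpower y (e + 1) = Rpower y e * y.
Proof. intros hy. rewrite Rpower_plus, Rpower_1 by exact hy. reflexivity. Qed.

Lemma exp_le_iff (x y : R) : exp x <= exp y <-> x <= y.
Proof.
  split; intros h.
  - destruct (Rle_or_lt x y) as [|hlt]; [assumption|].
    apply exp_increasing in hlt. lra.
  - destruct h as [hlt|heq]; [left; apply exp_increasing; exact hlt|right; rewrite heq; reflexivity].
Qed.

Lemma derive_eq_0_at_interior_min (f : R -> R) (lo hi x l : R) :
  lo < x < hi -> derivable_pt_lim f x l ->
  (forall q, lo < q < hi -> f x <= f q) -> l = 0.
Proof.
  intros hx hl hmin.
  assert (pr : derivable_pt f x) by (exists l; exact hl).
  rewrite <- (derive_pt_eq_0 f x l pr hl).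
  apply (deriv_minimum f lo hi); try lra.
  intros q h1 h2. apply hmin. lra.
Qed.

(* Decreasing on [(lo, L]], increasing on [[U, hi)]: the minimum over the
   compact [[L, U]] is a minimum over the whole open interval. *)
Lemma exists_min_of_derivative_signs (f f' : R -> R) (lo hi L U : R) :
  lo < L <= U -> U < hi ->
  (forall x, lo < x < hi -> derivable_pt_lim f x (f' x)) ->
  (forall x, lo < x <= L -> f' x < 0) ->
  (forall x, U <= x < hi -> 0 < f' x) ->
  exists m, lo < m < hi /\ forall q, lo < q < hi -> f m <= f q.
Proof.
  intros hL hU hder hdec hinc.
  destruct (continuity_ab_min f L U) as [m [hmin hm]]; [lra| |].
  { intros c hc. apply derivable_continuous_pt. exists (f' c).
    apply hder. lra. }
  exists m. split; [lra|]. intros q hq.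
  destruct (Rlt_or_le q L) as [hqL|hqL]; [|destruct (Rlt_or_le U q) as [hqU|hqU]].
  - destruct (MVT_cor2 f f' q L hqL) as [c [hc hcq]].
    { intros c hc. apply hder. lra. }
    assert (f' c < 0) by (apply hdec; lra).
    assert (f m <= f L) by (apply hmin; lra).
    nra.
  - destruct (MVT_cor2 f f' U q hqU) as [c [hc hcq]].
    { intros c hc. apply hder. lra. }
    assert (0 < f' c) by (apply hinc; lra).
    assert (f m <= f U) by (apply hmin; lra).
    nra.
  - apply hmin. lra.
Qed.

Section LogDelay.

Variables a delta : R.
Hypothesis ha : 0 < a.
Hypothesis hdelta : 0 < delta < 1.

Definition log_delay (x : R) : R := - ln x + a * x * Rpower (1 - x) (delta - 1).

Definition log_delay_deriv (x : R) : R :=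
  (a * x * Rpower (1 - x) (delta - 2) * (1 - delta * x) - 1) / x.

Lemma log_delay_derivable (x : R) :
  0 < x < 1 -> derivable_pt_lim log_delay x (log_delay_deriv x).
Proof.
  intros hx.
  assert (h1 : derivable_pt_lim (fct_cte 1 - id)%F x (0 - 1)).
  { apply derivable_pt_lim_minus;
      [apply derivable_pt_lim_const | apply derivable_pt_lim_id]. }
  assert (hpow := derivable_pt_lim_comp _ (fun y => Rpower y (delta - 1)) x _ _
                    h1 (derivable_pt_lim_power (1 - x) (delta - 1) ltac:(lra))).
  assert (hlin := derivable_pt_lim_scal _ a x _ (derivable_pt_lim_id x)).
  assert (hprod := derivable_pt_lim_mult _ _ x _ _ hlin hpow).
  assert (hsum := derivable_pt_lim_plus _ _ x _ _
                    (derivable_pt_lim_opp _ x _ (derivable_pt_lim_ln x ltac:(lra))) hprod).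
  replace (log_delay_deriv x) with
    (- / x + (a * 1 * Rpower (1 - x) (delta - 1)
              + a * x * ((delta - 1) * Rpower (1 - x) (delta - 1 - 1) * (0 - 1)))).
  - exact hsum.
  - unfold log_delay_deriv.
    replace (delta - 1) with ((delta - 2) + 1) at 1 by ring.
    rewrite Rpower_plus_1 by lra.
    replace (delta - 1 - 1) with (delta - 2) by ring.
    field. lra.
Qed.

Lemma log_delay_deriv_neg (x : R) : 0 < x -> x * (a + 2) <= 1 -> log_delay_deriv x < 0.
Proof.
  intros hx hxa.
  assert (hy : 0 < 1 - x < 1) by (split; nra).
  set (k := Rpower (1 - x) (delta - 2)).
  assert (hk : 0 < k) by apply exp_pos.
  (* [k (1-x)^2 = (1-x)^delta < 1] and [a x <= (1-x)^2], so [a x k < 1]. *)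
  assert (hk2 : k * ((1 - x) * (1 - x)) < 1).
  { unfold k. rewrite <- Rmult_assoc, <- !Rpower_plus_1 by lra.
    apply Rpower_lt_1; lra. }
  assert (hax : a * x <= (1 - x) * (1 - x)) by nra.
  assert (a * x * k < 1) by nra.
  unfold log_delay_deriv. fold k.
  apply Rdiv_neg_pos; [|lra].
  assert (0 < a * x * k * (delta * x)) by (repeat apply Rmult_lt_0_compat; lra).
  nra.
Qed.

Lemma log_delay_deriv_pos_of_ge_inv_a (x : R) : 0 < x < 1 -> 1 <= a * x -> 0 < log_delay_deriv x.
Proof.
  intros hx hax.
  set (k := Rpower (1 - x) (delta - 2)).
  assert (hk1 : 1 < k * (1 - x)).
  { unfold k. rewrite <- Rpower_plus_1 by lra. apply Rpower_gt_1; lra. }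
  unfold log_delay_deriv. fold k.
  apply Rdiv_lt_0_compat; [|lra].
  assert (0 < k * ((1 - delta) * x)) by (apply Rmult_lt_0_compat; [apply exp_pos | nra]).
  assert (k * (1 - delta * x) > 1) by nra.
  nra.
Qed.

Lemma log_delay_deriv_pos (x : R) : x < 1 -> 1 <= x * (1 + a * (1 - delta)) -> 0 < log_delay_deriv x.
Proof.
  intros hx1 hxa.
  assert (0 < a * (1 - delta)) by (apply Rmult_lt_0_compat; lra).
  assert (hx0 : 0 < x) by nra.
  set (k := Rpower (1 - x) (delta - 2)).
  assert (hk1 : 1 < k * (1 - x)).
  { unfold k. rewrite <- Rpower_plus_1 by lra. apply Rpower_gt_1; lra. }
  unfold log_delay_deriv. fold k.
  apply Rdiv_lt_0_compat; [|lra].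
  assert (a * x * (1 - delta) >= 1 - x) by nra.
  assert (hk : 0 < k) by apply exp_pos.
  assert (0 < a * x * k * (delta * (1 - x))) by (repeat apply Rmult_lt_0_compat; lra).
  assert (a * x * (1 - delta) * k >= (1 - x) * k) by nra.
  nra.
Qed.

Lemma log_delay_has_min :
  exists m, 0 < m < 1 /\ forall q, 0 < q < 1 -> log_delay m <= log_delay q.
Proof.
  assert (hU : 0 < 1 + a * (1 - delta)) by nra.
  apply (exists_min_of_derivative_signs log_delay log_delay_deriv 0 1
           (/ (a + 2)) (/ (1 + a * (1 - delta)))).
  - split; [apply Rinv_0_lt_compat; lra|].
    apply Rinv_le_contravar; nra.
  - rewrite <- Rinv_1. apply Rinv_lt_contravar; nra.
  - exact log_delay_derivable.
  - intros x [hx hxL]. apply log_delay_deriv_neg; [lra|].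
    apply (Rmult_le_compat_r (a + 2)) in hxL; [|lra].
    rewrite Rinv_l in hxL; lra.
  - intros x [hxU hx]. apply log_delay_deriv_pos; [lra|].
    apply (Rmult_le_compat_r (1 + a * (1 - delta))) in hxU; [|lra].
    rewrite Rinv_l in hxU; lra.
Qed.

Lemma log_delay_min_bounds (p : R) :
  0 < p < 1 -> (forall q, 0 < q < 1 -> log_delay p <= log_delay q) ->
  / (a + 2) < p < / a.
Proof.
  intros hp hmin.
  assert (hcrit := derive_eq_0_at_interior_min log_delay 0 1 p _ hp
                     (log_delay_derivable p hp) hmin).
  split.
  - destruct (Rle_or_lt (p * (a + 2)) 1) as [h|h].
    + assert (log_delay_deriv p < 0) by (apply log_delay_deriv_neg; lra). lra.
    + apply (Rmult_lt_reg_r (a + 2)); [lra|]. rewrite Rinv_l; lra.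
  - destruct (Rle_or_lt 1 (a * p)) as [h|h].
    + assert (0 < log_delay_deriv p) by (apply log_delay_deriv_pos_of_ge_inv_a; lra). lra.
    + apply (Rmult_lt_reg_l a); [lra|]. rewrite Rinv_r; lra.
Qed.

End LogDelay.

Lemma delta_of_bounds (d : nat) (alpha : R) :
  (0 < d)%nat -> INR d < alpha -> 0 < delta_of d alpha < 1.
Proof.
  intros hd halpha.
  assert (0 < INR d) by (apply lt_0_INR; lia).
  unfold delta_of. split.
  - apply Rdiv_lt_0_compat; lra.
  - apply (Rmult_lt_reg_r alpha); [lra|]. field_simplify; lra.
Qed.

Lemma unit_ball_volume_pos (d : nat) : 0 < unit_ball_volume d.
Proof.
  assert (hPI := PI_RGT_0).
  assert (hfact : forall n, 0 < INR (fact n)) by (intros n; apply lt_0_INR, lt_O_fact).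
  unfold unit_ball_volume. destruct (Nat.even d); apply Rdiv_lt_0_compat; auto.
  - apply pow_lt; lra.
  - apply Rmult_lt_0_compat; [|apply pow_lt; lra].
    apply Rmult_lt_0_compat; auto; lra.
Qed.

Lemma Cdelta_pos (delta : R) : 0 < delta < 1 -> 0 < Cdelta delta.
Proof.
  intros hdelta. assert (hPI := PI_RGT_0).
  assert (0 < PI * delta < PI) by (split; nra).
  unfold Cdelta. apply Rdiv_lt_0_compat; [lra|].
  apply sin_gt_0; lra.
Qed.

Lemma aloha_a_pos (d : nat) (alpha lam r0 theta : R) :
  (0 < d)%nat -> INR d < alpha -> 0 < lam -> 0 < r0 ->
  0 < aloha_a lam d alpha r0 theta.
Proof.
  intros hd halpha hlam hr0.
  assert (hC := Cdelta_pos _ (delta_of_bounds d alpha hd halpha)).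
  assert (hV := unit_ball_volume_pos d).
  assert (0 < r0 ^ d) by (apply pow_lt; lra).
  assert (0 < Rpower theta (delta_of d alpha)) by apply exp_pos.
  unfold aloha_a.
  apply Rmult_lt_0_compat; [|exact hC].
  repeat apply Rmult_lt_0_compat; assumption.
Qed.

Lemma mean_local_delay_eq (d : nat) (alpha lam r0 theta W N0 q : R) : 0 < q ->
  mean_local_delay lam d alpha r0 theta W N0 q =
  exp (log_delay (aloha_a lam d alpha r0 theta) (delta_of d alpha) q
       + theta * Rpower r0 alpha * W * N0).
Proof.
  intros hq. unfold mean_local_delay, log_delay.
  replace (delta_of d alpha - 1) with (- (1 - delta_of d alpha)) by ring.
  rewrite Rpower_Ropp, Rplus_assoc, (exp_plus (- ln q)), exp_Ropp, exp_ln by exact hq.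
  unfold Rdiv. do 3 f_equal. ring.
Qed.

Theorem theorem6 (d : nat) (alpha lam r0 theta W N0 : R)
  (hd : (0 < d)%nat) (halpha : INR d < alpha)
  (hlam : 0 < lam) (hr0 : 0 < r0) (htheta : 0 < theta)
  (hW : 0 < W) (hN0 : 0 <= N0) :
  let D := mean_local_delay lam d alpha r0 theta W N0 in
  let a := aloha_a lam d alpha r0 theta in
  (exists p, 0 < p < 1 /\ forall q, 0 < q < 1 -> D p <= D q) /\
  (forall p, 0 < p < 1 -> (forall q, 0 < q < 1 -> D p <= D q) ->
     / (a + 2) < p < / a).
Proof.
  intros D a.
  assert (ha : 0 < a) by (apply aloha_a_pos; assumption).
  assert (hdelta := delta_of_bounds d alpha hd halpha).
  assert (hDF : forall p q, 0 < p < 1 -> 0 < q < 1 ->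
            D p <= D q <-> log_delay a (delta_of d alpha) p <= log_delay a (delta_of d alpha) q).
  { intros p q hp hq. unfold D.
    rewrite !mean_local_delay_eq, exp_le_iff by lra. fold a. lra. }
  split.
  - destruct (log_delay_has_min a (delta_of d alpha) ha hdelta) as [m [hm hmin]].
    exists m. split; [exact hm|]. intros q hq. apply hDF; auto.
  - intros p hp hmin. apply (log_delay_min_bounds a (delta_of d alpha) ha hdelta p hp).
    intros q hq. apply hDF; auto.
Qed.
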